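(* The graph $L_{6,1}$ has a perfect partition; that is, the set of all $265$ derangements of $\{1,\dots,6\}$ (equivalently, all $6\times 6$ permutation matrices with zero diagonal) can be partitioned into subsets each of which consists of $5$ permutation matrices summing to $J_6-I_6$.
   Context: $L_{n,1}=K_{n,n}-nK_{1,1}$ is the complete bipartite graph $K_{n,n}$ with a perfect matching removed; its biadjacency matrix is $J_n-I_n$, where $J_n$ is the all-ones $n\times n$ matrix. Its perfect matchings correspond exactly to derangements of $\{1,\dots,n\}$ (permutation matrices $P$ with $P\le J_n-I_n$ entrywise). A regular bipartite graph $G$ has a perfect partition if its set of perfect matchings can be partitioned into parts each of which is a $1$-factorization of $G$ (a set of pairwise edge-disjoint perfect matchings whose union is $G$); in matrix language, the set of permutation matrices $P\le A(G)$ can be partitioned into subsets each summing to $A(G)$. *)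

From mathcomp Require Import all_boot all_fingroup.
Set Implicit Arguments. Unset Strict Implicit. Unset Printing Implicit Defensive.

(* A bipartite graph on colour classes 'I_n x 'I_n given by its biadjacency
   relation A (A i j <=> edge between row-vertex i and column-vertex j). *)

(* Biadjacency relation of L_{n,1} = K_{n,n} - n K_{1,1}: matrix J_n - I_n. *)
Definition L1rel (n : nat) : rel 'I_n := fun i j => i != j.

Definition perfect_matchings (n : nat) (A : rel 'I_n) : {set {perm 'I_n}} :=
  [set s : {perm 'I_n} | [forall i, A i (s i)]].

Definition one_factorization (n : nat) (A : rel 'I_n) (F : {set {perm 'I_n}}) : Prop :=
  [/\ F \subset perfect_matchings A,
      (forall s t, s \in F -> t \in F -> s != t -> forall i, s i != t i)
    & (forall i j, A i j -> exists2 s, s \in F & s i = j)].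

Definition has_perfect_partition (n : nat) (A : rel 'I_n) : Prop :=
  exists P : {set {set {perm 'I_n}}},
    partition P (perfect_matchings A) /\
    (forall F, F \in P -> one_factorization A F).

Arguments L1rel n : clear implicits.

From mathcomp Require Import all_boot all_fingroup.
Set Implicit Arguments. Unset Strict Implicit. Unset Printing Implicit Defensive.

(* A perfect partition of L_{6,1} is exhibited by an explicit certificate: a
   list of 53 blocks of 5 derangements of {0,...,5}, each derangement written
   as its list of images. *)

Section PermutationCodes.
Variable n : nat.

Definition code (s : {perm 'I_n}) : seq nat := [seq val (s i) | i <- enum 'I_n].

Lemma size_code (s : {perm 'I_n}) : size (code s) = n.
Proof. by rewrite size_map size_enum_ord. Qed.

Lemma nth_code (s : {perm 'I_n}) (i : 'I_n) : nth 0 (code s) i = s i.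
Proof. by rewrite (nth_map i) ?size_enum_ord // nth_ord_enum. Qed.

Lemma code_inj : injective code.
Proof.
move=> s t eq_st; apply/permP => i; apply: val_inj.
by rewrite /= -!nth_code eq_st.
Qed.

Definition derangement_code (l : seq nat) : bool :=
  [&& size l == n, all (fun a => a < n) l, uniq l &
      all (fun i => nth 0 l i != i) (iota 0 n)].

Lemma derangement_codeP (s : {perm 'I_n}) :
  reflect (forall i, s i != i) (derangement_code (code s)).
Proof.
apply: (iffP and4P) => [[_ _ _ /allP no_fix] i | no_fix].
  have := no_fix i; rewrite mem_iota add0n ltn_ord nth_code => /(_ isT).
  by apply: contraNneq => ->.
split; first by rewrite size_code.
- by apply/allP => _ /mapP[i _ ->]; apply: ltn_ord.
- by rewrite map_inj_uniq ?enum_uniq // => i j /val_inj/perm_inj.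
- apply/allP => k; rewrite mem_iota /= => lt_kn.
  have := no_fix (Ordinal lt_kn); apply: contra => /eqP eq_k.
  by apply/eqP/val_inj; rewrite /= -nth_code.
Qed.

Lemma derangement_code_perm (l : seq nat) :
  derangement_code l -> exists s : {perm 'I_n}, code s = l.
Proof.
case/and4P => /eqP size_l /allP l_lt uniq_l _.
pose f (i : 'I_n) : 'I_n := insubd i (nth 0 l i).
have val_f i : val (f i) = nth 0 l i.
  by rewrite val_insubd l_lt // mem_nth ?size_l.
have inj_f : injective f.
  move=> i j /(congr1 val); rewrite !val_f => /eqP.
  by rewrite nth_uniq ?size_l // => /eqP/val_inj.
exists (perm inj_f); apply: (@eq_from_nth _ 0); first by rewrite size_code.
by rewrite size_code => k lt_kn; rewrite -[k]/(val (Ordinal lt_kn)) nth_code permE val_f.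
Qed.

Lemma perfect_matchings_L1 (s : {perm 'I_n}) :
  (s \in perfect_matchings (L1rel n)) = derangement_code (code s).
Proof.
rewrite inE; apply/forallP/derangement_codeP => no_fix i.
  by rewrite eq_sym; apply: no_fix.
by rewrite /L1rel eq_sym no_fix.
Qed.

End PermutationCodes.

Fixpoint words (m k : nat) : seq (seq nat) :=
  if m is m'.+1 then [seq a :: w | a <- iota 0 k, w <- words m' k] else [:: [::]].

Lemma words_complete (m k : nat) (l : seq nat) :
  size l = m -> all (fun a => a < k) l -> l \in words m k.
Proof.
elim: m l => [|m IHm] [|a l] //= [size_l] /andP[lt_ak lt_l].
by apply: allpairs_f; rewrite ?mem_iota ?IHm.
Qed.

Lemma flatten_uniq_block (T : eqType) (bs : seq (seq T)) (i j : nat) (x : T) :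
  uniq (flatten bs) -> i < size bs -> j < size bs ->
  x \in nth [::] bs i -> x \in nth [::] bs j -> i = j.
Proof.
have in_flatten k bs' : k < size bs' -> x \in nth [::] bs' k -> x \in flatten bs'.
  by move=> lt_k x_k; apply/flattenP; exists (nth [::] bs' k); rewrite ?mem_nth.
elim: bs i j => [|b bs IH] [|i] [|j] //=; rewrite cat_uniq => /and3P[_ disj uniq_bs].
- move=> _ lt_j xb /(in_flatten _ _ lt_j) x_bs.
  by case/hasP: disj; exists x.
- move=> lt_i _ /(in_flatten _ _ lt_i) x_bs xb.
  by case/hasP: disj; exists x.
- by move=> lt_i lt_j x_i x_j; congr _.+1; apply: IH.
Qed.

Section Certificates.
Variable n : nat.

Definition disagree (l1 l2 : seq nat) : bool :=
  all (fun i => nth 0 l1 i != nth 0 l2 i) (iota 0 n).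

Definition factorization_block (B : seq (seq nat)) : bool :=
  [&& B != [::], all (derangement_code n) B,
      all2rel (fun l1 l2 => (l1 != l2) ==> disagree l1 l2) B &
      all (fun i => all (fun j => (i != j) ==> has (fun l => nth 0 l i == j) B)
                        (iota 0 n)) (iota 0 n)].

Definition partition_certificate (blocks : seq (seq (seq nat))) : bool :=
  [&& all factorization_block blocks, uniq (flatten blocks) &
      all (mem (flatten blocks)) [seq l <- words n n | derangement_code n l]].

Definition block_set (B : seq (seq nat)) : {set {perm 'I_n}} := [set s | code s \in B].

Lemma block_set_one_factorization (B : seq (seq nat)) :
  factorization_block B -> one_factorization (L1rel n) (block_set B).
Proof.
case/and4P=> _ /allP der_B /allrelP disagree_B /allP cover_B; split.
- by apply/subsetP => s; rewrite inE perfect_matchings_L1 => /der_B.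
- move=> s t; rewrite !inE => s_B t_B neq_st i.
  have neq_code : code s != code t by apply: contra neq_st => /eqP/code_inj ->.
  have /allP := implyP (disagree_B _ _ s_B t_B) neq_code.
  by move=> /(_ i); rewrite mem_iota add0n ltn_ord !nth_code => /(_ isT).
- move=> i j neq_ij.
  have := cover_B i; rewrite mem_iota add0n ltn_ord => /(_ isT) /allP /(_ j).
  rewrite mem_iota add0n ltn_ord => /(_ isT) /implyP /(_ neq_ij) /hasP[l l_B /eqP l_ij].
  have [s code_s] := derangement_code_perm (der_B l l_B).
  by exists s; rewrite ?inE ?code_s //; apply: val_inj; rewrite /= -nth_code code_s.
Qed.

Section ValidCertificate.
Variable blocks : seq (seq (seq nat)).
Hypothesis valid : partition_certificate blocks.

Definition certified_partition : {set {set {perm 'I_n}}} :=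
  [set block_set (nth [::] blocks k) | k : 'I_(size blocks)].

Lemma certified_blocks_ok (k : 'I_(size blocks)) :
  factorization_block (nth [::] blocks k).
Proof. by case/and3P: valid => /all_nthP -> //. Qed.

Lemma derangement_in_blocks (s : {perm 'I_n}) :
  derangement_code n (code s) -> code s \in flatten blocks.
Proof.
case/and3P: valid => _ _ /allP complete der_s; apply: complete.
rewrite mem_filter der_s words_complete ?size_code //.
by case/and4P: der_s.
Qed.

Lemma certified_cover : cover certified_partition = perfect_matchings (L1rel n).
Proof.
apply/setP => s; rewrite perfect_matchings_L1; apply/bigcupP/idP.
  case=> _ /imsetP[k _ ->]; rewrite inE.
  by case/and4P: (certified_blocks_ok k) => _ /allP der_k _ _ /der_k.
move=> /derangement_in_blocks /flattenP[B B_blocks s_B].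
have [k lt_k B_k] := nthP [::] B_blocks.
by exists (block_set B); [apply/imsetP; exists (Ordinal lt_k); rewrite ?B_k | rewrite inE].
Qed.

Lemma certified_trivIset : trivIset certified_partition.
Proof.
apply/trivIsetP => _ _ /imsetP[k1 _ ->] /imsetP[k2 _ ->] neq_blocks.
rewrite -setI_eq0; apply/eqP/setP => s; rewrite !inE.
apply/negP => /andP[s_k1 s_k2]; case/negP: neq_blocks.
case/and3P: valid => _ uniq_blocks _.
by rewrite (flatten_uniq_block uniq_blocks _ _ s_k1 s_k2).
Qed.

Lemma certified_no_empty_block : set0 \notin certified_partition.
Proof.
apply/imsetP => -[k _ /esym/setP empty_k].
case/and4P: (certified_blocks_ok k) => /eqP nonempty /allP der_k _ _.
case: (nth [::] blocks k) nonempty der_k empty_k => // l B _ der_lB.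
have [s code_s] := derangement_code_perm (der_lB l (mem_head _ _)).
by move=> /(_ s); rewrite !inE code_s eqxx.
Qed.

Theorem certificate_perfect_partition : has_perfect_partition (L1rel n).
Proof.
exists certified_partition; split.
  by rewrite /partition certified_cover eqxx certified_trivIset certified_no_empty_block.
by move=> _ /imsetP[k _ ->]; apply: block_set_one_factorization; apply: certified_blocks_ok.
Qed.

End ValidCertificate.
End Certificates.

Definition L61_blocks : seq (seq (seq nat)) := [::
  [:: [:: 1; 2; 3; 4; 5; 0]; [:: 2; 4; 1; 5; 0; 3]; [:: 3; 0; 5; 1; 2; 4]; [:: 4; 5; 0; 2; 3; 1]; [:: 5; 3; 4; 0; 1; 2]];
  [:: [:: 1; 3; 0; 5; 2; 4]; [:: 2; 4; 5; 1; 0; 3]; [:: 3; 0; 4; 2; 5; 1]; [:: 4; 5; 1; 0; 3; 2]; [:: 5; 2; 3; 4; 1; 0]];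
  [:: [:: 1; 3; 4; 5; 2; 0]; [:: 2; 5; 3; 0; 1; 4]; [:: 3; 4; 5; 2; 0; 1]; [:: 4; 2; 0; 1; 5; 3]; [:: 5; 0; 1; 4; 3; 2]];
  [:: [:: 1; 4; 0; 2; 5; 3]; [:: 2; 0; 1; 5; 3; 4]; [:: 3; 2; 5; 4; 0; 1]; [:: 4; 5; 3; 0; 1; 2]; [:: 5; 3; 4; 1; 2; 0]];
  [:: [:: 1; 0; 4; 2; 5; 3]; [:: 2; 5; 1; 0; 3; 4]; [:: 3; 4; 5; 1; 2; 0]; [:: 4; 3; 0; 5; 1; 2]; [:: 5; 2; 3; 4; 0; 1]];
  [:: [:: 1; 5; 3; 0; 2; 4]; [:: 2; 0; 5; 4; 1; 3]; [:: 3; 2; 4; 1; 5; 0]; [:: 4; 3; 1; 5; 0; 2]; [:: 5; 4; 0; 2; 3; 1]];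
  [:: [:: 1; 2; 4; 5; 0; 3]; [:: 2; 0; 5; 4; 3; 1]; [:: 3; 4; 0; 1; 5; 2]; [:: 4; 5; 3; 2; 1; 0]; [:: 5; 3; 1; 0; 2; 4]];
  [:: [:: 1; 4; 3; 2; 5; 0]; [:: 2; 3; 1; 5; 0; 4]; [:: 3; 5; 0; 4; 1; 2]; [:: 4; 2; 5; 0; 3; 1]; [:: 5; 0; 4; 1; 2; 3]];
  [:: [:: 1; 3; 4; 2; 5; 0]; [:: 2; 5; 0; 1; 3; 4]; [:: 3; 4; 5; 0; 1; 2]; [:: 4; 2; 3; 5; 0; 1]; [:: 5; 0; 1; 4; 2; 3]];
  [:: [:: 1; 2; 5; 0; 3; 4]; [:: 2; 0; 4; 1; 5; 3]; [:: 3; 5; 1; 4; 0; 2]; [:: 4; 3; 0; 5; 2; 1]; [:: 5; 4; 3; 2; 1; 0]];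
  [:: [:: 1; 5; 3; 4; 0; 2]; [:: 2; 0; 5; 1; 3; 4]; [:: 3; 4; 1; 2; 5; 0]; [:: 4; 2; 0; 5; 1; 3]; [:: 5; 3; 4; 0; 2; 1]];
  [:: [:: 1; 5; 0; 4; 2; 3]; [:: 2; 4; 5; 0; 3; 1]; [:: 3; 0; 1; 2; 5; 4]; [:: 4; 2; 3; 5; 1; 0]; [:: 5; 3; 4; 1; 0; 2]];
  [:: [:: 1; 2; 4; 0; 5; 3]; [:: 2; 5; 0; 4; 3; 1]; [:: 3; 4; 5; 1; 0; 2]; [:: 4; 3; 1; 5; 2; 0]; [:: 5; 0; 3; 2; 1; 4]];
  [:: [:: 1; 0; 4; 5; 3; 2]; [:: 2; 5; 3; 1; 0; 4]; [:: 3; 4; 5; 2; 1; 0]; [:: 4; 2; 1; 0; 5; 3]; [:: 5; 3; 0; 4; 2; 1]];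
  [:: [:: 1; 5; 0; 4; 3; 2]; [:: 2; 4; 1; 0; 5; 3]; [:: 3; 2; 5; 1; 0; 4]; [:: 4; 0; 3; 5; 2; 1]; [:: 5; 3; 4; 2; 1; 0]];
  [:: [:: 1; 3; 4; 0; 5; 2]; [:: 2; 4; 5; 1; 3; 0]; [:: 3; 2; 0; 5; 1; 4]; [:: 4; 5; 1; 2; 0; 3]; [:: 5; 0; 3; 4; 2; 1]];
  [:: [:: 1; 0; 5; 4; 3; 2]; [:: 2; 4; 3; 1; 5; 0]; [:: 3; 5; 4; 0; 2; 1]; [:: 4; 2; 1; 5; 0; 3]; [:: 5; 3; 0; 2; 1; 4]];
  [:: [:: 1; 4; 5; 2; 0; 3]; [:: 2; 0; 4; 5; 3; 1]; [:: 3; 5; 1; 0; 2; 4]; [:: 4; 2; 3; 1; 5; 0]; [:: 5; 3; 0; 4; 1; 2]];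
  [:: [:: 1; 3; 5; 2; 0; 4]; [:: 2; 0; 1; 4; 5; 3]; [:: 3; 5; 4; 0; 1; 2]; [:: 4; 2; 0; 5; 3; 1]; [:: 5; 4; 3; 1; 2; 0]];
  [:: [:: 1; 2; 0; 5; 3; 4]; [:: 2; 3; 4; 1; 5; 0]; [:: 3; 0; 5; 4; 1; 2]; [:: 4; 5; 1; 0; 2; 3]; [:: 5; 4; 3; 2; 0; 1]];
  [:: [:: 1; 4; 5; 0; 2; 3]; [:: 2; 5; 3; 4; 0; 1]; [:: 3; 0; 4; 5; 1; 2]; [:: 4; 3; 1; 2; 5; 0]; [:: 5; 2; 0; 1; 3; 4]];
  [:: [:: 1; 2; 5; 4; 0; 3]; [:: 2; 3; 4; 0; 5; 1]; [:: 3; 4; 0; 5; 1; 2]; [:: 4; 5; 1; 2; 3; 0]; [:: 5; 0; 3; 1; 2; 4]];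
  [:: [:: 1; 5; 4; 0; 3; 2]; [:: 2; 0; 3; 5; 1; 4]; [:: 3; 4; 0; 2; 5; 1]; [:: 4; 2; 5; 1; 0; 3]; [:: 5; 3; 1; 4; 2; 0]];
  [:: [:: 1; 0; 3; 5; 2; 4]; [:: 2; 5; 4; 1; 3; 0]; [:: 3; 4; 1; 0; 5; 2]; [:: 4; 3; 5; 2; 0; 1]; [:: 5; 2; 0; 4; 1; 3]];
  [:: [:: 1; 0; 4; 5; 2; 3]; [:: 2; 5; 1; 4; 3; 0]; [:: 3; 2; 5; 0; 1; 4]; [:: 4; 3; 0; 2; 5; 1]; [:: 5; 4; 3; 1; 0; 2]];
  [:: [:: 1; 4; 5; 2; 3; 0]; [:: 2; 3; 0; 4; 5; 1]; [:: 3; 0; 1; 5; 2; 4]; [:: 4; 5; 3; 1; 0; 2]; [:: 5; 2; 4; 0; 1; 3]];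
  [:: [:: 1; 2; 0; 4; 5; 3]; [:: 2; 4; 3; 5; 0; 1]; [:: 3; 5; 4; 1; 2; 0]; [:: 4; 3; 5; 0; 1; 2]; [:: 5; 0; 1; 2; 3; 4]];
  [:: [:: 1; 3; 0; 4; 5; 2]; [:: 2; 4; 5; 0; 1; 3]; [:: 3; 2; 1; 5; 0; 4]; [:: 4; 5; 3; 1; 2; 0]; [:: 5; 0; 4; 2; 3; 1]];
  [:: [:: 1; 2; 3; 5; 0; 4]; [:: 2; 5; 4; 0; 1; 3]; [:: 3; 0; 5; 4; 2; 1]; [:: 4; 3; 0; 1; 5; 2]; [:: 5; 4; 1; 2; 3; 0]];
  [:: [:: 1; 5; 4; 0; 2; 3]; [:: 2; 4; 0; 5; 3; 1]; [:: 3; 0; 1; 4; 5; 2]; [:: 4; 3; 5; 2; 1; 0]; [:: 5; 2; 3; 1; 0; 4]];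
  [:: [:: 1; 4; 3; 5; 2; 0]; [:: 2; 5; 4; 1; 0; 3]; [:: 3; 0; 5; 2; 1; 4]; [:: 4; 3; 1; 0; 5; 2]; [:: 5; 2; 0; 4; 3; 1]];
  [:: [:: 1; 4; 3; 5; 0; 2]; [:: 2; 5; 4; 0; 3; 1]; [:: 3; 2; 5; 4; 1; 0]; [:: 4; 0; 1; 2; 5; 3]; [:: 5; 3; 0; 1; 2; 4]];
  [:: [:: 1; 4; 5; 0; 3; 2]; [:: 2; 3; 4; 5; 1; 0]; [:: 3; 5; 0; 1; 2; 4]; [:: 4; 0; 3; 2; 5; 1]; [:: 5; 2; 1; 4; 0; 3]];
  [:: [:: 1; 3; 5; 4; 0; 2]; [:: 2; 4; 3; 0; 5; 1]; [:: 3; 5; 0; 2; 1; 4]; [:: 4; 0; 1; 5; 2; 3]; [:: 5; 2; 4; 1; 3; 0]];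
  [:: [:: 1; 5; 4; 2; 0; 3]; [:: 2; 4; 1; 5; 3; 0]; [:: 3; 2; 0; 1; 5; 4]; [:: 4; 3; 5; 0; 2; 1]; [:: 5; 0; 3; 4; 1; 2]];
  [:: [:: 1; 3; 0; 2; 5; 4]; [:: 2; 5; 1; 4; 0; 3]; [:: 3; 2; 4; 5; 1; 0]; [:: 4; 0; 5; 1; 3; 2]; [:: 5; 4; 3; 0; 2; 1]];
  [:: [:: 1; 3; 5; 0; 2; 4]; [:: 2; 0; 3; 4; 5; 1]; [:: 3; 5; 4; 1; 0; 2]; [:: 4; 2; 1; 5; 3; 0]; [:: 5; 4; 0; 2; 1; 3]];
  [:: [:: 1; 0; 5; 4; 2; 3]; [:: 2; 4; 3; 5; 1; 0]; [:: 3; 2; 1; 0; 5; 4]; [:: 4; 5; 0; 1; 3; 2]; [:: 5; 3; 4; 2; 0; 1]];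
  [:: [:: 1; 4; 0; 5; 3; 2]; [:: 2; 5; 3; 4; 1; 0]; [:: 3; 2; 4; 0; 5; 1]; [:: 4; 0; 5; 1; 2; 3]; [:: 5; 3; 1; 2; 0; 4]];
  [:: [:: 1; 2; 4; 5; 3; 0]; [:: 2; 3; 5; 0; 1; 4]; [:: 3; 5; 0; 4; 2; 1]; [:: 4; 0; 3; 1; 5; 2]; [:: 5; 4; 1; 2; 0; 3]];
  [:: [:: 1; 5; 0; 2; 3; 4]; [:: 2; 3; 1; 4; 5; 0]; [:: 3; 4; 5; 0; 2; 1]; [:: 4; 0; 3; 5; 1; 2]; [:: 5; 2; 4; 1; 0; 3]];
  [:: [:: 1; 0; 5; 2; 3; 4]; [:: 2; 3; 4; 5; 0; 1]; [:: 3; 2; 1; 4; 5; 0]; [:: 4; 5; 0; 1; 2; 3]; [:: 5; 4; 3; 0; 1; 2]];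
  [:: [:: 1; 3; 4; 5; 0; 2]; [:: 2; 4; 0; 1; 5; 3]; [:: 3; 5; 1; 4; 2; 0]; [:: 4; 0; 5; 2; 3; 1]; [:: 5; 2; 3; 0; 1; 4]];
  [:: [:: 1; 4; 3; 0; 5; 2]; [:: 2; 3; 5; 1; 0; 4]; [:: 3; 0; 4; 5; 2; 1]; [:: 4; 5; 0; 2; 1; 3]; [:: 5; 2; 1; 4; 3; 0]];
  [:: [:: 1; 5; 3; 2; 0; 4]; [:: 2; 0; 4; 5; 1; 3]; [:: 3; 2; 0; 4; 5; 1]; [:: 4; 3; 5; 1; 2; 0]; [:: 5; 4; 1; 0; 3; 2]];
  [:: [:: 1; 0; 3; 2; 5; 4]; [:: 2; 5; 0; 4; 1; 3]; [:: 3; 4; 1; 5; 2; 0]; [:: 4; 3; 5; 1; 0; 2]; [:: 5; 2; 4; 0; 3; 1]];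
  [:: [:: 1; 0; 3; 4; 5; 2]; [:: 2; 3; 0; 5; 1; 4]; [:: 3; 5; 4; 2; 0; 1]; [:: 4; 2; 5; 1; 3; 0]; [:: 5; 4; 1; 0; 2; 3]];
  [:: [:: 1; 2; 3; 0; 5; 4]; [:: 2; 3; 5; 4; 0; 1]; [:: 3; 5; 4; 2; 1; 0]; [:: 4; 0; 1; 5; 3; 2]; [:: 5; 4; 0; 1; 2; 3]];
  [:: [:: 1; 2; 5; 4; 3; 0]; [:: 2; 3; 0; 1; 5; 4]; [:: 3; 4; 1; 5; 0; 2]; [:: 4; 5; 3; 0; 2; 1]; [:: 5; 0; 4; 2; 1; 3]];
  [:: [:: 1; 5; 3; 4; 2; 0]; [:: 2; 3; 1; 0; 5; 4]; [:: 3; 2; 4; 5; 0; 1]; [:: 4; 0; 5; 2; 1; 3]; [:: 5; 4; 0; 1; 3; 2]];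
  [:: [:: 1; 5; 4; 2; 3; 0]; [:: 2; 0; 3; 1; 5; 4]; [:: 3; 4; 0; 5; 2; 1]; [:: 4; 2; 5; 0; 1; 3]; [:: 5; 3; 1; 4; 0; 2]];
  [:: [:: 1; 3; 5; 4; 2; 0]; [:: 2; 4; 0; 5; 1; 3]; [:: 3; 0; 4; 1; 5; 2]; [:: 4; 5; 3; 2; 0; 1]; [:: 5; 2; 1; 0; 3; 4]];
  [:: [:: 1; 4; 0; 5; 2; 3]; [:: 2; 3; 5; 4; 1; 0]; [:: 3; 5; 1; 2; 0; 4]; [:: 4; 2; 3; 0; 5; 1]; [:: 5; 0; 4; 1; 3; 2]]].

Lemma L61_blocks_valid : partition_certificate 6 L61_blocks.
Proof. by vm_compute. Qed.

Theorem theorem2p1 : has_perfect_partition (L1rel 6).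
Proof. exact: certificate_perfect_partition L61_blocks_valid. Qed.
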